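(* In the Restricted Grid Scheduling problem, for any finite multiset of items (each of size $S$ or $L$) and any admissible sequence of bins (each of size in $[S,M]$), there exists an optimal thrifty packing that contains no bad bin.
   Context: Fix an integer $S>1$, $L=2S-1$, $M=4S-3$. Items have size $S$ or $L$; bins have integer sizes in $[S,M]$ and arrive in a sequence, which is admissible if it ends with at least as many bins of size $M$ as there are items. A packing assigns every item to a bin with total item size in each bin at most the bin size; used bins are those receiving at least one item; the cost is the sum of sizes of used bins. A packing is valid if each empty bin is smaller than every item packed in a later bin; optimal if valid and of minimum cost among valid packings. A bin is wasteful if its empty space is at least the size of some item packed in a later bin; a packing is thrifty if it has no wasteful bin. A used bin is bad if it contains at least one item of size $S$, its empty space is at least $L-S$, and some item of size $L$ is packed in a later bin. *)

From mathcomp Require Import all_boot.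
Set Implicit Arguments. Unset Strict Implicit. Unset Printing Implicit Defensive.

Definition Lsz (S : nat) : nat := 2 * S - 1.
Definition Msz (S : nat) : nat := 4 * S - 3.

(* Items: a multiset of sizes, given as a sequence [items];
   bins: a sequence [bins] of sizes, in arrival order. *)
Definition items_ok (S : nat) (items : seq nat) : Prop :=
  all (fun x => (x == S) || (x == Lsz S)) items.
Definition bins_ok (S : nat) (bins : seq nat) : Prop :=
  all (fun b => (S <= b <= Msz S)) bins.
Definition admissible (S : nat) (items bins : seq nat) : Prop :=
  size items <= size bins /\
  all (fun b => b == Msz S) (drop (size bins - size items) bins).

Section Packing.
Variables (S : nat) (items bins : seq nat).
Local Notation n := (size items).
Local Notation m := (size bins).

Definition assignment := {ffun 'I_n -> 'I_m}.

Definition isize (i : 'I_n) : nat := nth 0 items i.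
Definition bsize (j : 'I_m) : nat := nth 0 bins j.

Definition load (p : assignment) (j : 'I_m) : nat :=
  \sum_(i : 'I_n | p i == j) isize i.
Definition used (p : assignment) (j : 'I_m) : bool := [exists i, p i == j].
Definition cost (p : assignment) : nat := \sum_(j : 'I_m | used p j) bsize j.
Definition empty_space (p : assignment) (j : 'I_m) : nat := bsize j - load p j.

Definition packing (p : assignment) : Prop := forall j, load p j <= bsize j.

Definition valid (p : assignment) : Prop :=
  packing p /\
  forall (j : 'I_m) (i : 'I_n), ~~ used p j -> (j < p i)%N -> bsize j < isize i.

Definition optimal (p : assignment) : Prop :=
  valid p /\ forall q : assignment, valid q -> cost p <= cost q.

Definition wasteful (p : assignment) (j : 'I_m) : Prop :=
  exists i : 'I_n, (j < p i)%N /\ isize i <= empty_space p j.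

Definition thrifty (p : assignment) : Prop := forall j, ~ wasteful p j.

Definition bad (p : assignment) (j : 'I_m) : Prop :=
  used p j /\
  (exists i : 'I_n, p i = j /\ isize i = S) /\
  Lsz S - S <= empty_space p j /\
  (exists i : 'I_n, (j < p i)%N /\ isize i = Lsz S).
End Packing.

From mathcomp Require Import all_boot zify.
From Stdlib Require Import Classical.
Set Implicit Arguments. Unset Strict Implicit. Unset Printing Implicit Defensive.

(** Among the optimal packings pick one of least potential, the sum over all
   items of size times bin index; moving an item to an earlier bin lowers it.
   A packing that is valid except at one empty bin is repaired by moving into
   that bin a later item that fits, and repeating at the bin this may empty;
   cost and potential do not increase.  A wasteful bin thus yields, after
   moving the later item into it and repairing, a packing of no larger cost
   and smaller potential.  For a bad bin with an S-item and a later L-item: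
   if all bins before the L-item are used, swapping the two items keeps the
   used bins and lowers the potential.  Otherwise the first unused bin lies
   between them, is smaller than L, and is followed only by L-items; as
   2L > M, the L-item is alone in its bin.  Moving the S-item to the unused
   bin and the L-item into the bad bin empties the L-item's bin, and
   repairing it saves at least L, so the cost drops. *)

Lemma exists_minimizer (T : Type) (P : T -> Prop) (f : T -> nat) :
  (exists x, P x) -> exists2 x, P x & forall y, P y -> f x <= f y.
Proof.
move=> [x Px]; have [N] := ubnP (f x); elim: N x Px => // N IH x Px fxN.
case: (classic (exists2 y, P y & f y < f x)) => [[y Py fyx] | no_smaller].
  by apply: (IH y) => //; lia.
exists x => // y Py; rewrite leqNgt; apply/negP => fyx.
by apply: no_smaller; exists y.
Qed.

Section Moves.
Variables (items bins : seq nat).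
Local Notation n := (size items).
Local Notation m := (size bins).
Local Notation A := (assignment items bins).

Definition move_item (p : A) (i : 'I_n) (b : 'I_m) : A :=
  [ffun x => if x == i then b else p x].

Definition potential (p : A) : nat := \sum_i isize i * p i.

Definition valid_except (p : A) (h : 'I_m) : Prop :=
  forall (j : 'I_m) (i : 'I_n), j != h -> ~~ used p j -> j < p i -> bsize j < isize i.

Lemma move_item_at (p : A) i b : move_item p i b i = b.
Proof. by rewrite ffunE eqxx. Qed.

Lemma move_item_other (p : A) i b x : x != i -> move_item p i b x = p x.
Proof. by rewrite ffunE => /negbTE ->. Qed.

Lemma usedP (p : A) j : reflect (exists i, p i = j) (used p j).
Proof. by apply: (iffP existsP) => [[i /eqP]|[i <-]]; exists i. Qed.

Lemma used_item (p : A) i : used p (p i).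
Proof. by apply/usedP; exists i. Qed.

Lemma used_move_target (p : A) i b : used (move_item p i b) b.
Proof. by rewrite -{2}(move_item_at p i b) used_item. Qed.

Lemma used_move_other (p : A) i b j : j != b -> j != p i ->
  used (move_item p i b) j = used p j.
Proof.
move=> jb jpi; apply/usedP/usedP => [[x qxj]|[x pxj]]; exists x.
  by move: qxj; rewrite ffunE; case: eqP => // _ E; rewrite E eqxx in jb.
by rewrite move_item_other //; apply: contraNneq jpi => xi; rewrite -pxj xi.
Qed.

Lemma load_unused (p : A) j : ~~ used p j -> load p j = 0.
Proof.
by move=> /usedP unused; rewrite /load big1 // => i /eqP pij; case: unused; exists i.
Qed.

Lemma load_sum (p : A) j : load p j = \sum_i (if p i == j then isize i else 0).
Proof. by rewrite /load big_mkcond. Qed.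

Lemma load_move (p : A) i b j :
  load (move_item p i b) j + (if p i == j then isize i else 0) =
  load p j + (if b == j then isize i else 0).
Proof.
rewrite !load_sum [in LHS](bigD1 i) //= [in RHS](bigD1 i) //= move_item_at.
rewrite (eq_bigr (fun x => if p x == j then isize x else 0)).
  by rewrite addnAC [RHS]addnAC [(if p i == j then _ else _) + _]addnC.
by move=> x xi; rewrite move_item_other.
Qed.

Lemma isize_le_load (p : A) i : isize i <= load p (p i).
Proof. by rewrite load_sum (bigD1 i) //= eqxx leq_addr. Qed.

Lemma pair_le_load (p : A) x y : x != y -> p x = p y ->
  isize x + isize y <= load p (p x).
Proof.
move=> xy pxy; rewrite load_sum (bigD1 x) //= (bigD1 y) /=; last by rewrite eq_sym.
by rewrite pxy eqxx addnA leq_addr.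
Qed.

Lemma potential_move (p : A) i b :
  potential (move_item p i b) + isize i * p i = potential p + isize i * b.
Proof.
rewrite /potential [in LHS](bigD1 i) //= [in RHS](bigD1 i) //= move_item_at.
rewrite (eq_bigr (fun x => isize x * p x)); first lia.
by move=> x xi; rewrite move_item_other.
Qed.

Lemma potential_move_earlier (p : A) i (b : 'I_m) : 0 < isize i -> b < p i ->
  potential (move_item p i b) < potential p.
Proof.
move=> si bpi; have := potential_move p i b.
have : isize i * b < isize i * p i by rewrite ltn_pmul2l.
lia.
Qed.

Lemma cost_sum (p : A) : cost p = \sum_j used p j * bsize j.
Proof.
by rewrite /cost big_mkcond; apply: eq_bigr => j _; case: (used p j); rewrite ?mul1n.
Qed.

Lemma cost_eq_used (p q : A) : (forall j, used q j = used p j) -> cost q = cost p.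
Proof. by move=> same; rewrite !cost_sum; apply: eq_bigr => j _; rewrite same. Qed.

Lemma cost_eq_except1 (p q : A) a : (forall j, j != a -> used q j = used p j) ->
  cost q + used p a * bsize a = cost p + used q a * bsize a.
Proof.
move=> same; rewrite !cost_sum [in LHS](bigD1 a) //= [in RHS](bigD1 a) //=.
rewrite (eq_bigr (fun j => used p j * bsize j)); first lia.
by move=> j ja; rewrite same.
Qed.

Lemma cost_eq_except2 (p q : A) a c : a != c ->
  (forall j, j != a -> j != c -> used q j = used p j) ->
  cost q + used p a * bsize a + used p c * bsize c =
  cost p + used q a * bsize a + used q c * bsize c.
Proof.
move=> ac same; rewrite !cost_sum [in LHS](bigD1 a) //= [in RHS](bigD1 a) //=.
rewrite [in LHS](bigD1 c) /= 1?eq_sym // [in RHS](bigD1 c) /= 1?eq_sym //.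
rewrite (eq_bigr (fun j => used p j * bsize j)); first lia.
by move=> j /andP [ja jc]; rewrite same.
Qed.

Lemma packing_move (p : A) i b : packing p -> load p b + isize i <= bsize b ->
  packing (move_item p i b).
Proof.
move=> pack_p fit j; have := load_move p i b j; have := pack_p j.
by case: (p i == j); case: (eqVneq b j) => [<-|_]; lia.
Qed.

Lemma valid_except_of_valid (p : A) h : valid p -> valid_except p h.
Proof. by move=> [_ valid_p] j i _; apply: valid_p. Qed.

Lemma valid_except_used (p : A) h : packing p -> valid_except p h -> used p h -> valid p.
Proof.
move=> pack_p vex used_h; split=> // j i unused_j; apply: vex => //.
by apply: contraNneq unused_j => ->.
Qed.

Lemma valid_except_move (p : A) h i (b : 'I_m) : valid_except p h -> b < p i ->
  used (move_item p i b) h -> valid_except (move_item p i b) (p i).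
Proof.
move=> vex bpi used_h j x jpi unused_j.
have jh : j != h by apply: contraNneq unused_j => ->.
have jb : j != b by apply: contraNneq unused_j => ->; apply: used_move_target.
rewrite used_move_other // in unused_j.
rewrite ffunE; case: eqP => [->|_] jx; apply: vex => //; exact: ltn_trans bpi.
Qed.

Lemma load_move2 (p : A) i0 i1 b0 b1 y : i0 != i1 ->
  load (move_item (move_item p i0 b0) i1 b1) y
    + (if p i0 == y then isize i0 else 0) + (if p i1 == y then isize i1 else 0) =
  load p y + (if b0 == y then isize i0 else 0) + (if b1 == y then isize i1 else 0).
Proof.
move=> i01; have := load_move p i0 b0 y.
have := load_move (move_item p i0 b0) i1 b1 y.
by rewrite move_item_other 1?eq_sym //; lia.
Qed.

Lemma potential_move2 (p : A) i0 i1 b0 b1 : i0 != i1 ->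
  potential (move_item (move_item p i0 b0) i1 b1) + isize i0 * p i0 + isize i1 * p i1 =
  potential p + isize i0 * b0 + isize i1 * b1.
Proof.
move=> i01; have := potential_move p i0 b0.
have := potential_move (move_item p i0 b0) i1 b1.
by rewrite move_item_other 1?eq_sym //; lia.
Qed.

Lemma used_move2_other (p : A) i0 i1 b0 b1 y : i0 != i1 ->
  y != b0 -> y != b1 -> y != p i0 -> y != p i1 ->
  used (move_item (move_item p i0 b0) i1 b1) y = used p y.
Proof.
move=> i01 yb0 yb1 yp0 yp1.
rewrite used_move_other ?used_move_other //.
by rewrite move_item_other // eq_sym.
Qed.

End Moves.

Section RestrictedGrid.
Variables (S : nat) (items bins : seq nat).
Local Notation n := (size items).
Local Notation m := (size bins).
Local Notation A := (assignment items bins).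
Local Notation L := (Lsz S).

Hypothesis S_gt1 : 1 < S.
Hypothesis isize_SL : forall i : 'I_n, isize i = S \/ isize i = L.
Hypothesis bsize_range : forall j : 'I_m, S <= bsize j <= Msz S.

Lemma S_lt_L : S < L.
Proof. by rewrite /Lsz; lia. Qed.

Lemma isize_gt0 (i : 'I_n) : 0 < isize i.
Proof. by case: (isize_SL i) => ->; rewrite /Lsz; lia. Qed.

Lemma large_pair_overflow (q : A) x y : packing q -> x != y -> q x = q y ->
  isize x = L -> isize y = L -> False.
Proof.
move=> pack_q xy qxy xL yL; have := pair_le_load xy qxy.
by have := pack_q (q x); have := bsize_range (q x); rewrite xL yL /Lsz /Msz; lia.
Qed.

Lemma fill_hole (q : A) (h : 'I_m) :
  packing q -> valid_except q h -> ~~ used q h ->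
  exists2 q' : A, valid q' &
    [/\ potential q' <= potential q, cost q' <= cost q + bsize h &
        (forall x, h < q x -> isize x = L) -> L <= bsize h ->
        cost q' + L <= cost q + bsize h].
Proof.
have [N] := ubnP (potential q); elim: N q h => // N IH q h qN pack_q vex_q unused_h.
case: (boolP [exists x, (h < q x) && (isize x <= bsize h)]) => [|no_fit]; last first.
  exists q; last by split=> //; [apply: leq_addr | move=> _; lia].
  split=> // j x; case: (eqVneq j h) => [-> _ hx | jh]; last exact: vex_q.
  by rewrite ltnNge; apply: contra no_fit => fit; apply/existsP; exists x; rewrite hx.
move=> /existsP [i /andP [hi fit]].
set q1 := move_item q i h.
have pack1 : packing q1 by apply: packing_move; rewrite ?load_unused.
have used1_h : used q1 h := used_move_target q i h.
have vex1 : valid_except q1 (q i) := valid_except_move vex_q hi used1_h.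
have lt1 : potential q1 < potential q := potential_move_earlier (isize_gt0 i) hi.
have h_qi : h != q i by rewrite neq_ltn hi.
have cost1 : cost q1 + bsize (q i) = cost q + bsize h + used q1 (q i) * bsize (q i).
  have := cost_eq_except2 (q := q1) h_qi (fun j => @used_move_other _ _ q i h j).
  by rewrite (negbTE unused_h) used_item used1_h; lia.
have [used1 | unused1] := boolP (used q1 (q i)).
  exists q1; first exact: valid_except_used pack1 vex1 used1.
  split; [exact: ltnW | by rewrite used1 in cost1; lia | move=> large _].
  have /usedP [x q1x] := used1.
  have xi : x != i by apply: contraNneq h_qi => xi; rewrite -q1x xi move_item_at.
  rewrite move_item_other // in q1x.
  by case: (large_pair_overflow pack_q xi q1x); apply: large; rewrite ?q1x.
have [|q' valid_q' [pot' cost' large']] := IH q1 (q i) _ pack1 vex1 unused1; first lia.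
rewrite (negbTE unused1) in cost1.
exists q' => //; split; [lia | lia | move=> large _].
suff: cost q' + L <= cost q1 + bsize (q i) by lia.
apply: large'.
  move=> x; case: (eqVneq x i) => [-> | xi]; first by rewrite move_item_at ltnNge ltnW.
  by rewrite move_item_other // => qix; apply: large; apply: ltn_trans qix.
by rewrite -(large i hi); apply: leq_trans (isize_le_load q i) (pack_q _).
Qed.

Lemma min_potential_packing_valid (q : A) : packing q ->
  (forall q' : A, packing q' -> potential q <= potential q') -> valid q.
Proof.
move=> pack_q min_q; split=> // j i unused_j ji; rewrite ltnNge; apply/negP => fit.
have pack' : packing (move_item q i j) by apply: packing_move; rewrite ?load_unused.
by have := min_q _ pack'; rewrite leqNgt potential_move_earlier ?isize_gt0.
Qed.

Section Minimizer.
Variable p : A.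
Hypothesis valid_p : valid p.
Hypothesis cost_min : forall q : A, valid q -> cost p <= cost q.
Hypothesis potential_min :
  forall q : A, valid q -> cost q <= cost p -> potential p <= potential q.

Lemma no_cheaper_repair (q : A) h : packing q -> valid_except q h ->
  potential q < potential p -> cost q + bsize h <= cost p + used q h * bsize h ->
  False.
Proof.
move=> pack_q vex_q pot_q cost_q.
have [used_h | unused_h] := boolP (used q h).
  suff: potential p <= potential q by lia.
  apply: potential_min; first exact: valid_except_used pack_q vex_q used_h.
  by rewrite used_h in cost_q; lia.
have [q' valid_q' [pot' cost' _]] := fill_hole pack_q vex_q unused_h.
suff: potential p <= potential q' by lia.
by apply: potential_min => //; rewrite (negbTE unused_h) in cost_q; lia.
Qed.

Lemma minimizer_thrifty : thrifty p.
Proof.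
have [pack_p valid_p'] := valid_p.
move=> j [i [ji]]; rewrite /empty_space => fit.
have room : load p j + isize i <= bsize j by have := pack_p j; lia.
have used_j : used p j.
  case: (boolP (used p j)) => // unused_j; have := valid_p' j i unused_j ji.
  by rewrite load_unused in fit; lia.
set q := move_item p i j.
have used_q_j : used q j := used_move_target p i j.
apply: (@no_cheaper_repair q (p i)).
- exact: packing_move.
- exact: valid_except_move (valid_except_of_valid (h := j) valid_p) ji used_q_j.
- exact: potential_move_earlier (isize_gt0 i) ji.
- have same : forall y, y != p i -> used q y = used p y.
    move=> y ypi; case: (eqVneq y j) => [-> | yj]; first by rewrite used_q_j used_j.
    exact: used_move_other.
  by have := cost_eq_except1 same; rewrite used_item; lia.
Qed.

Lemma bad_swap_impossible (i0 i1 : 'I_n) :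
  isize i0 = S -> isize i1 = L -> p i0 < p i1 ->
  load p (p i0) + (L - S) <= bsize (p i0) ->
  (forall y : 'I_m, y < p i1 -> used p y) -> False.
Proof.
move=> i0S i1L lt01 room all_used; have [pack_p valid_p'] := valid_p.
have i01 : i0 != i1 by apply: contraTneq lt01 => ->; rewrite ltnn.
have ne10 : (p i1 == p i0) = false by apply/negbTE; rewrite neq_ltn lt01 orbT.
set q := move_item (move_item p i0 (p i1)) i1 (p i0).
have q_i0 : q i0 = p i1 by rewrite move_item_other // move_item_at.
have q_i1 : q i1 = p i0 by rewrite move_item_at.
have q_other x : x != i0 -> x != i1 -> q x = p x by move=> ? ?; rewrite !move_item_other.
have same_used y : used q y = used p y.
  have [-> | y0] := eqVneq y (p i0); first by rewrite -{1}q_i1 !used_item.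
  have [-> | y1] := eqVneq y (p i1); first by rewrite -{1}q_i0 !used_item.
  exact: used_move2_other.
have pack_q : packing q.
  move=> y; have := load_move2 p (p i1) (p i0) y i01; rewrite -/q.
  have := pack_p y; have := S_lt_L; rewrite i0S i1L.
  have [<- | _] := eqVneq (p i0) y; first by rewrite ne10; lia.
  by have [<- | _] := eqVneq (p i1) y; lia.
have valid_q : valid q.
  split=> // y x; rewrite same_used => unused_y.
  have lt1y : p i1 < y.
    case: (ltngtP y (p i1)) => // [/all_used used_y | /val_inj y1].
      by rewrite used_y in unused_y.
    by rewrite y1 used_item in unused_y.
  have [-> | x0] := eqVneq x i0; first by rewrite q_i0; lia.
  have [-> | x1] := eqVneq x i1; first by rewrite q_i1; lia.
  by rewrite q_other //; apply: valid_p'.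
have := potential_min valid_q; rewrite (cost_eq_used same_used) => /(_ (leqnn _)).
have := potential_move2 p (p i1) (p i0) i01; rewrite -/q; have := S_lt_L.
rewrite i0S i1L; nia.
Qed.

Lemma unused_before_large (i0 i1 : 'I_n) (j' : 'I_m) :
  isize i0 = S -> isize i1 = L -> ~~ used p j' -> j' < p i1 ->
  [/\ p i0 < j', bsize j' < L & forall x, j' < p x -> isize x = L].
Proof.
move=> i0S i1L unused_j' j'1; have [_ valid_p'] := valid_p.
have small_j' : bsize j' < L by rewrite -i1L; apply: valid_p'.
split=> // [|x j'x].
  case: (ltngtP (p i0) j') => // [j'0 | /val_inj j'0].
    by have := valid_p' _ _ unused_j' j'0; have := bsize_range j'; rewrite i0S; lia.
  by rewrite -j'0 used_item in unused_j'.
have := valid_p' _ _ unused_j' j'x; have := bsize_range j'.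
by case: (isize_SL x) => ->; lia.
Qed.

Lemma bad_shift_impossible (i0 i1 : 'I_n) (j' : 'I_m) :
  isize i0 = S -> isize i1 = L ->
  load p (p i0) + (L - S) <= bsize (p i0) ->
  ~~ used p j' -> j' < p i1 -> (forall y, ~~ used p y -> j' <= y) -> False.
Proof.
move=> i0S i1L room unused_j' j'1 first_j'; have [pack_p valid_p'] := valid_p.
have i01 : i0 != i1 by apply/eqP => i01; move: i1L; rewrite -i01 i0S; have := S_lt_L; lia.
have [lt0' small_j' large_after] := unused_before_large i0S i1L unused_j' j'1.
set q := move_item (move_item p i0 j') i1 (p i0).
have q_i0 : q i0 = j' by rewrite move_item_other // move_item_at.
have q_i1 : q i1 = p i0 by rewrite move_item_at.
have q_other x : x != i0 -> x != i1 -> q x = p x by move=> ? ?; rewrite !move_item_other.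
have used_q_j' : used q j' by rewrite -{1}q_i0 used_item.
have used_q_0 : used q (p i0) by rewrite -{1}q_i1 used_item.
have [ne'0 ne10 ne'1] : [/\ j' != p i0, p i1 != p i0 & j' != p i1].
  by split; rewrite neq_ltn ?lt0' ?j'1 ?(ltn_trans lt0' j'1) ?orbT.
have pack_q : packing q.
  move=> y; have := load_move2 p j' (p i0) y i01; rewrite -/q.
  have := pack_p y; have := load_unused unused_j'; have := bsize_range j'.
  rewrite i0S i1L; have := S_lt_L.
  have [<- | _] := eqVneq (p i0) y; first by rewrite (negbTE ne'0) (negbTE ne10); lia.
  have [<- | _] := eqVneq (p i1) y; first by rewrite (negbTE ne'1); lia.
  by have [<- | _] := eqVneq j' y; lia.
have unused_q_1 : ~~ used q (p i1).
  apply/usedP => [[x qx]].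
  have [xi1 | x1] := eqVneq x i1; first by move: ne10; rewrite -qx xi1 q_i1 eqxx.
  have [xi0 | x0] := eqVneq x i0; first by move: ne'1; rewrite -qx xi0 q_i0 eqxx.
  rewrite q_other // in qx.
  by apply: (large_pair_overflow pack_p x1 qx) => //; apply: large_after; rewrite qx.
have vex_q : valid_except q (p i1).
  move=> y x y1 unused_y.
  have yj' : y != j' by apply: contraNneq unused_y => ->.
  have y0 : y != p i0 by apply: contraNneq unused_y => ->.
  rewrite used_move2_other // in unused_y.
  have [-> | x0] := eqVneq x i0.
    by rewrite q_i0 ltnNge first_j'.
  have [-> | x1] := eqVneq x i1.
    rewrite q_i1 => lt; apply: valid_p' unused_y _.
    exact: ltn_trans lt (ltn_trans lt0' j'1).
  by rewrite q_other // => lt; apply: valid_p'.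
have large_q x : p i1 < q x -> isize x = L.
  have [-> | x0] := eqVneq x i0; first by rewrite q_i0 ltnNge ltnW.
  have [-> | x1] := eqVneq x i1; first by rewrite q_i1 ltnNge ltnW ?(ltn_trans lt0').
  by rewrite q_other // => lt; apply/large_after/(ltn_trans j'1).
have L_le_1 : L <= bsize (p i1).
  by rewrite -i1L; apply: leq_trans (isize_le_load p i1) (pack_p _).
have cost_q : cost q + bsize (p i1) = cost p + bsize j'.
  have same y : y != j' -> y != p i1 -> used q y = used p y.
    move=> yj' y1; have [-> | y0] := eqVneq y (p i0); first by rewrite used_q_0 used_item.
    exact: used_move2_other.
  have := cost_eq_except2 ne'1 same.
  rewrite (negbTE unused_j') used_item used_q_j' (negbTE unused_q_1).
  by rewrite !mul1n !mul0n !addn0.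
have [q' valid_q' [_ _ /(_ large_q L_le_1) cost_q']] := fill_hole pack_q vex_q unused_q_1.
by have := cost_min valid_q'; lia.
Qed.

Lemma minimizer_not_bad j : ~ bad S p j.
Proof.
move=> [_ [[i0 [<- i0S]] [room [i1 [lt01 i1L]]]]].
have room' : load p (p i0) + (L - S) <= bsize (p i0).
  by have := valid_p.1 (p i0); rewrite /empty_space in room; lia.
have [all_used | ] := boolP [forall y : 'I_m, (y < p i1) ==> used p y].
  apply: (bad_swap_impossible i0S i1L lt01 room') => y.
  exact: implyP (forallP all_used y).
move=> /forallPn [y0]; rewrite negb_imply => /andP [y01 unused_y0].
case: (@arg_minnP _ y0 (fun y => ~~ used p y) val unused_y0) => j' unused_j' first_j'.
apply: (bad_shift_impossible i0S i1L room' unused_j' _ first_j').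
exact: leq_ltn_trans (first_j' _ unused_y0) y01.
Qed.

End Minimizer.

Lemma exists_optimal_thrifty_not_bad : (exists q : A, packing q) ->
  exists p : A, optimal p /\ thrifty p /\ forall j, ~ bad S p j.
Proof.
move=> /(exists_minimizer (fun q : A => potential q)) [q0 pack_q0 min_q0].
have /(exists_minimizer (fun q : A => cost q)) [p0 valid_p0 min_p0] : exists q : A, valid q.
  by exists q0; apply: min_potential_packing_valid.
have [|p [valid_p cost_p] min_p] :=
  exists_minimizer (fun q : A => potential q)
    (P := fun q : A => valid q /\ cost q = cost p0).
  by exists p0.
have cost_min (q : A) : valid q -> cost p <= cost q.
  by move=> valid_q; rewrite cost_p (min_p0 _ valid_q).
have potential_min (q : A) : valid q -> cost q <= cost p -> potential p <= potential q.
  move=> valid_q le_q; apply: min_p; split=> //.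
  by apply/eqP; rewrite eqn_leq -cost_p le_q cost_min.
exists p; split; first by split.
by split; [exact: minimizer_thrifty | exact: minimizer_not_bad].
Qed.

End RestrictedGrid.

Lemma admissible_packing (S : nat) (items bins : seq nat) :
  admissible S items bins -> (forall i : 'I_(size items), isize i <= Msz S) ->
  exists q : assignment items bins, packing q.
Proof.
move=> [n_le_m tail_M] small.
have tail_bin (i : 'I_(size items)) : size bins - size items + i < size bins.
  by have := ltn_ord i; lia.
exists [ffun i => Ordinal (tail_bin i)] => j; rewrite /load.
have [/existsP [i /eqP ij] | no_item] :=
  boolP [exists i : 'I_(size items), size bins - size items + i == j].
- rewrite (big_pred1 i) => [|x /=].
    apply: leq_trans (small i) (eq_leq _); apply/esym/eqP/(allP tail_M).
    by rewrite /bsize -ij -nth_drop mem_nth // size_drop subKn // ltn_ord.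
  rewrite ffunE; apply/eqP/eqP => [/(congr1 val) /= | ->]; last exact: val_inj.
  by rewrite -ij => /addnI /val_inj.
- rewrite big_pred0 // => x; rewrite ffunE; apply: contraNF no_item => /eqP <-.
  by apply/existsP; exists x.
Qed.

Theorem lemma3 (S : nat) (items bins : seq nat) :
  1 < S ->
  items_ok S items ->
  bins_ok S bins ->
  admissible S items bins ->
  exists p : assignment items bins,
    optimal p /\ thrifty p /\ (forall j, ~ bad S p j).
Proof.
move=> S_gt1 /allP items_SL /allP bins_range adm.
have isize_SL (i : 'I_(size items)) : isize i = S \/ isize i = Lsz S.
  by have /orP [/eqP | /eqP] := items_SL _ (mem_nth 0 (ltn_ord i)); [left | right].
have bsize_range (j : 'I_(size bins)) : S <= bsize j <= Msz S.
  exact: bins_range _ (mem_nth 0 (ltn_ord j)).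
apply: exists_optimal_thrifty_not_bad => //; apply: admissible_packing adm _ => i.
by case: (isize_SL i) => ->; rewrite /Lsz /Msz; lia.
Qed.
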